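(* Let $\alpha \in (0,1]$. Consider any (possibly randomized) sampling scheme that, given any pair of tables $T_1,T_2$ with a join column $J$, outputs subsets $S_1 \subseteq T_1$ and $S_2 \subseteq T_2$ with effective sampling rate at most $\alpha$, i.e. $\mathrm{E}[|S_i|] \le \alpha |T_i|$ for $i=1,2$. Then the scheme cannot guarantee, for all possible inputs, that $\mathrm{E}[|S_1 \bowtie_J S_2|] > \alpha\, |T_1 \bowtie_J T_2|$; that is, there exist tables $T_1,T_2$ for which $\mathrm{E}[|S_1 \bowtie_J S_2|] \le \alpha\, |T_1 \bowtie_J T_2|$.
   Context: Tables are finite multisets of tuples; $T_1 \bowtie_J T_2$ denotes the equi-join on column $J$, i.e. the set of pairs $(t_1,t_2)\in T_1\times T_2$ with $t_1.J=t_2.J$, and $S_1\bowtie_J S_2$ is the set of such pairs with $t_1\in S_1$, $t_2\in S_2$ (so $S_1\bowtie_J S_2 \subseteq T_1\bowtie_J T_2$). The effective sampling rate of a scheme is the expected ratio of the size of the resulting sample to the size of the original table. *)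

From mathcomp Require Import all_boot all_order all_algebra.
Set Implicit Arguments. Unset Strict Implicit. Unset Printing Implicit Defensive.
Import Order.TTheory GRing.Theory Num.Theory.
Local Open Scope ring_scope.

(* A table with n rows over the tuple type Tup: a finite multiset of tuples,
   represented by an indexing of its rows by 'I_n (row order is irrelevant). *)
Definition table (Tup : Type) (n : nat) := 'I_n -> Tup.

(* A sample S_i of T_i is a sub-multiset, i.e. a set of row positions.
   An outcome of a sampling run is a pair (S1, S2). *)
Definition outcome (n1 n2 : nat) : finType := ({set 'I_n1} * {set 'I_n2})%type.

(* A (possibly randomized) sampling scheme: for every input pair of tables it
   returns a probability distribution on outcomes (finite outcome space). *)
Definition sampling_scheme (R : realFieldType) (Tup : Type) :=
  forall n1 n2 : nat, table Tup n1 -> table Tup n2 -> {ffun outcome n1 n2 -> R}.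

Definition is_distribution (R : realFieldType) (T : finType) (p : {ffun T -> R}) :=
  (forall x, 0 <= p x) /\ \sum_x p x = 1.

Definition expect (R : realFieldType) (T : finType) (p : {ffun T -> R}) (f : T -> nat) : R :=
  \sum_x p x * (f x)%:R.

Definition join_size (Tup : Type) (K : eqType) (J : Tup -> K) (n1 n2 : nat)
  (T1 : table Tup n1) (T2 : table Tup n2) (S1 : {set 'I_n1}) (S2 : {set 'I_n2}) : nat :=
  #|[set ij : 'I_n1 * 'I_n2 | [&& ij.1 \in S1, ij.2 \in S2 & J (T1 ij.1) == J (T2 ij.2)]]|.

From mathcomp Require Import all_boot all_order all_algebra.
Import Order.TTheory GRing.Theory Num.Theory.
Local Open Scope ring_scope.

(* Take T1 = T2 = a single row.  Then the full join has exactly one pair, while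
   any sampled join has at most |S1| * |S2| <= |S1| pairs, so its expected size
   is bounded by the expected size of S1, which is at most alpha. *)

Lemma ler_expect (R : realFieldType) (T : finType) (p : {ffun T -> R})
    (f g : T -> nat) :
  (forall x, 0 <= p x) -> (forall x, f x <= g x)%N ->
  expect p f <= expect p g.
Proof.
move=> p_ge0 le_fg; apply: ler_sum => x _.
by rewrite ler_wpM2l // ler_nat.
Qed.

Section JoinSize.

Variables (Tup : Type) (K : eqType) (J : Tup -> K) (n1 n2 : nat).
Variables (T1 : table Tup n1) (T2 : table Tup n2).

Lemma join_size_le_mul (S1 : {set 'I_n1}) (S2 : {set 'I_n2}) :
  (join_size J T1 T2 S1 S2 <= #|S1| * #|S2|)%N.
Proof.
rewrite -cardsX; apply: subset_leq_card; apply/subsetP => ij.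
by rewrite !inE => /and3P[-> ->].
Qed.

Lemma join_size_le_card_mul (S1 : {set 'I_n1}) (S2 : {set 'I_n2}) :
  (join_size J T1 T2 S1 S2 <= #|S1| * n2)%N.
Proof.
apply: leq_trans (join_size_le_mul S1 S2) _.
by rewrite leq_mul2l -[X in (_ <= X)%N](card_ord n2) max_card orbT.
Qed.

Lemma join_size_setT_const_key :
  (forall i j, J (T1 i) = J (T2 j)) -> join_size J T1 T2 setT setT = (n1 * n2)%N.
Proof.
move=> same_key; rewrite /join_size; transitivity #|[set: 'I_n1 * 'I_n2]|.
  by apply: eq_card => ij; rewrite !inE (same_key ij.1 ij.2) eqxx.
by rewrite cardsT card_prod !card_ord.
Qed.

End JoinSize.

Theorem theorem1 (R : realFieldType) (Tup : Type) (K : eqType) (J : Tup -> K)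
  (t0 : Tup) (alpha : R) (scheme : sampling_scheme R Tup) :
  0 < alpha <= 1 ->
  (forall n1 n2 (T1 : table Tup n1) (T2 : table Tup n2),
      is_distribution (scheme n1 n2 T1 T2)) ->
  (forall n1 n2 (T1 : table Tup n1) (T2 : table Tup n2),
      expect (scheme n1 n2 T1 T2) (fun o => #|o.1|) <= alpha * n1%:R /\
      expect (scheme n1 n2 T1 T2) (fun o => #|o.2|) <= alpha * n2%:R) ->
  exists n1 n2 (T1 : table Tup n1) (T2 : table Tup n2),
    (0 < join_size J T1 T2 setT setT)%N /\
    expect (scheme n1 n2 T1 T2) (fun o => join_size J T1 T2 o.1 o.2)
      <= alpha * (join_size J T1 T2 setT setT)%:R.
Proof.
move=> _ distr rate.
pose T : table Tup 1 := fun=> t0.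
have full_join : join_size J T T setT setT = 1%N.
  exact: join_size_setT_const_key.
exists 1%N, 1%N, T, T; rewrite full_join; split=> //.
have [rate1 _] := rate 1%N 1%N T T.
apply: le_trans rate1; apply: ler_expect => [|o].
- by case: (distr 1%N 1%N T T).
- by rewrite -[X in (_ <= X)%N]muln1; apply: join_size_le_card_mul.
Qed.
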